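(* For every integer $r$, \[\mathcal{H}^r_k = \big(f(D)\,\partial(\overline{L}^\times)\big)^{G_k}\big/\iota(k^\times)\partial(L^\times),\] where $D\in\operatorname{Div}(X_{\overline{k}})$ is any good divisor of degree $r$ (the coset $f(D)\partial(\overline{L}^\times)\subset \overline{M}^\times$ is independent of the choice). In particular $\mathcal{H}^0_k=\partial(\overline{L}^\times)^{G_k}/\iota(k^\times)\partial(L^\times)$.
   Context: Let $p$ be a prime, $k$ a field of characteristic $\neq p$ containing the $p$-th roots of unity, $\overline{k}$ a separable closure, $G_k=\mathrm{Gal}(\overline{k}/k)$. Let $X$ be a smooth projective curve over $k$ with a degree $p$ cyclic cover $X\to\mathbb{P}^1$ over $k$, unramified above $\infty$, given by an affine model $y^p=c\,h(x)$ with $c\in k^\times$ and $h\in k[x]$ monic, $p$-th-power-free, of degree $n$ divisible by $p$; the branch points are the roots of $h$. Let $\Omega\subset X(\overline{k})$ be the set of ramification points, $x(\omega)$ the $x$-coordinate of $\omega$, and $\mathfrak{m}$ the pullback of $\infty$. Write $h=\prod_{i=1}^e h_i^{n_i}$ with distinct monic irreducible $h_i$; let $L=k[x]/(h_1\cdots h_e)\cong K_1\times\dots\times K_e$ ($K_i=k[x]/(h_i)$), and $N:L\to k$ the weighted norm $N(\alpha_1,\dots,\alpha_e)=\prod_i N_{K_i/k}(\alpha_i)^{n_i}$. Let $M=L\times k$, $\partial:L^\times\to M^\times$, $\alpha\mapsto(\alpha^p,N(\alpha))$, and $\iota:k^\times\to M^\times$, $a\mapsto(a,a^{n/p})$. Write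 $\overline{L}=L\otimes_k\overline{k}\cong\mathrm{Map}(\Omega,\overline{k})$, $\overline{M}=M\otimes_k\overline{k}$, with the same maps extended. A divisor on $X_{\overline{k}}$ is good if its support is disjoint from $\Omega$ and from the support of $\mathfrak{m}$. For an affine point $P=(x_0,y_0)\in X(\overline{k})$ not in $\Omega$, set $f(P)=\big((x_0-x(\omega))_{\omega\in\Omega},\,y_0\big)\in \overline{L}^\times\times\overline{k}^\times=\overline{M}^\times$, and for a good divisor $D=\sum n_P[P]$ set $f(D)=\prod_P f(P)^{n_P}$. For $r\in\mathbb{Z}$, \[\mathcal{H}^r_k=\frac{\{(\alpha,s)\in L^\times\times k^\times: c^rN(\alpha)=s^p\}}{\{(\gamma\alpha^p,\gamma^{n/p}N(\alpha)):\alpha\in L^\times,\gamma\in k^\times\}}\subset M^\times/\iota(k^\times)\partial(L^\times).\] *)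

From HB Require Import structures.
From mathcomp Require Import all_boot all_order all_algebra all_field.
From mathcomp.multinomials Require Import freeg.
Set Implicit Arguments. Unset Strict Implicit. Unset Printing Implicit Defensive.
Import GRing.Theory.
Local Open Scope ring_scope.

Definition is_sep_closure (k kbar : fieldType) (emb : {rmorphism k -> kbar}) :=
  (forall x : kbar, exists q : {poly k},
      [/\ q != 0, separable_poly q & root (map_poly emb q) x]) /\
  (forall q : {poly kbar}, separable_poly q -> (1 < size q)%N ->
      exists x, root q x).

Definition in_Gk (k kbar : fieldType) (emb : {rmorphism k -> kbar})
  (s : {rmorphism kbar -> kbar}) :=
  bijective s /\ forall x : k, s (emb x) = emb x.

Definition pth_power_free (k : fieldType) (p : nat) (h : {poly k}) :=
  forall g : {poly k}, g ^+ p %| h -> (size g <= 1)%N.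

(* Good affine points of X(k̄): (x0,y0) with y0^p = c h(x0), y0 <> 0
   (i.e. not a ramification point, and not above infinity). *)
Definition good_point (kbar : fieldType) (p : nat) (cb : kbar) (hb : {poly kbar})
  (P : kbar * kbar) :=
  (P.2 != 0) && (P.2 ^+ p == cb * hb.[P.1]).

Definition good_div (kbar : fieldType) (p : nat) (cb : kbar) (hb : {poly kbar})
  (D : {freeg (kbar * kbar)}) :=
  all (good_point p cb hb) (dom D).

(* Elements of M̄ = L̄ x k̄ with L̄ = Map(Ω, k̄), where Ω is identified (via the
   x-coordinate) with the set of roots of h in k̄; an element of L̄ is given by
   a function k̄ -> k̄, only its values on the roots matter. *)
Definition Mbar (kbar : fieldType) := ((kbar -> kbar) * kbar)%type.

Definition fdiv (kbar : fieldType) (D : {freeg (kbar * kbar)}) : Mbar kbar :=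
  (fun w => \prod_(P <- dom D) (P.1 - w) ^ coeff P D,
   \prod_(P <- dom D) P.2 ^ coeff P D).

(* weighted norm on L̄: N(beta) = prod over roots (with multiplicity) *)
Definition Nbar (kbar : fieldType) (rts : seq kbar) (b : kbar -> kbar) : kbar :=
  \prod_(a <- rts) b a.

(* image in L̄ of the class of a polynomial a ∈ k[x] in L = k[x]/(h_1...h_e) *)
Definition Lemb (k kbar : fieldType) (emb : {rmorphism k -> kbar}) (a : {poly k})
  : kbar -> kbar := fun w => (map_poly emb a).[w].

Definition unit_Mbar (kbar : fieldType) (rts : seq kbar) (m : Mbar kbar) :=
  (forall w, w \in rts -> m.1 w != 0) /\ m.2 != 0.

Definition in_coset (kbar : fieldType) (p : nat) (rts : seq kbar)
  (fD m : Mbar kbar) :=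
  exists b : kbar -> kbar, [/\ forall w, w \in rts -> b w != 0,
     forall w, w \in rts -> m.1 w = fD.1 w * b w ^+ p
   & m.2 = fD.2 * Nbar rts b].

(* m is fixed by sigma acting on M̄ = Map(Ω,k̄) x k̄
   ((sigma.beta)(w) = sigma(beta(sigma^{-1} w))) *)
Definition fixed_by (kbar : fieldType) (rts : seq kbar)
  (s : {rmorphism kbar -> kbar}) (m : Mbar kbar) :=
  (forall w, w \in rts -> s (m.1 w) = m.1 (s w)) /\ s m.2 = m.2.

(* For a good divisor D of degree r, f(D) = (beta, s) satisfies
   s^p = c^r N(beta), because y^p = c h(x) at every point of D. Conversely, every
   unit (beta', s') of M̄ with s'^p = c^r N(beta') lies in f(D) ∂(L̄^×):
   choose p-th roots b of beta'/beta; the remaining discrepancy between s' and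
   s N(b) is a p-th root of unity, which is the norm of a root of unity supported
   at a single root of h, since that root has multiplicity prime to p (h is
   p-th-power-free). This description of the coset does not involve D.
   A G_k-invariant element of M̄ descends to M: its second coordinate is
   rational by Galois descent for k̄/k (every k-embedding of a subring extends
   to an automorphism of k̄, by Zorn's lemma), and its first coordinate is a
   G_k-equivariant function on the roots of h, hence interpolated by a polynomial
   over k. *)

From HB Require Import structures.
From mathcomp Require Import all_boot all_order all_algebra all_field.
From mathcomp.multinomials Require Import freeg.
From mathcomp Require Import boolp classical_sets.
From mathcomp Require Import zify.
Import GRing.Theory.
Local Open Scope ring_scope.
Set Implicit Arguments. Unset Strict Implicit. Unset Printing Implicit Defensive.

Lemma ex_min_measure (T : Type) (m : T -> nat) (Q : T -> Prop) :
  (exists x, Q x) -> exists x, Q x /\ forall y, Q y -> (m x <= m y)%N.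
Proof.
move=> [x Qx].
have exn : exists n, `[< exists y, Q y /\ m y = n >].
  by exists (m x); apply/asboolP; exists x.
case: (ex_minnP exn) => _ /asboolP [y [Qy <-]] ymin.
by exists y; split=> // z Qz; apply: ymin; apply/asboolP; exists z.
Qed.

Section PartialHom.
Variables (k K : fieldType) (e : {rmorphism k -> K}).

Definition ksubring (S : K -> Prop) :=
  [/\ forall c, S (e c), forall x y, S x -> S y -> S (x - y)
    & forall x y, S x -> S y -> S (x * y)].

Definition khom_on (S : K -> Prop) (f : K -> K) :=
  [/\ forall c, f (e c) = e c, forall x y, S x -> S y -> f (x - y) = f x - f y
    & forall x y, S x -> S y -> f (x * y) = f x * f y].

Definition coefs_in (S : K -> Prop) (P : {poly K}) := forall i, S P`_i.

Section Closure.
Variables (S : K -> Prop) (f : K -> K) (hS : ksubring S) (hf : khom_on S f).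

Lemma ksub_emb c : S (e c). Proof. by case: hS. Qed.
Lemma ksub0 : S 0. Proof. by rewrite -(rmorph0 e); apply: ksub_emb. Qed.
Lemma ksub1 : S 1. Proof. by rewrite -(rmorph1 e); apply: ksub_emb. Qed.
Lemma ksubB x y : S x -> S y -> S (x - y). Proof. by case: hS => _ + _; apply. Qed.
Lemma ksubM x y : S x -> S y -> S (x * y). Proof. by case: hS => _ _; apply. Qed.
Lemma ksubN x : S x -> S (- x).
Proof. by move=> Sx; rewrite -sub0r; apply: ksubB ksub0 Sx. Qed.
Lemma ksubD x y : S x -> S y -> S (x + y).
Proof. by move=> Sx Sy; rewrite -[y]opprK; apply: ksubB (ksubN Sy). Qed.
Lemma ksubX x n : S x -> S (x ^+ n).
Proof.
by move=> Sx; elim: n => [|n IH]; rewrite ?expr0 ?exprS; [apply: ksub1 | apply: ksubM].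
Qed.
Lemma ksub_sum (I : Type) (r : seq I) (F : I -> K) :
  (forall i, S (F i)) -> S (\sum_(i <- r) F i).
Proof.
by move=> SF; elim: r => [|a r IH]; rewrite ?big_nil ?big_cons; [apply: ksub0 | apply: ksubD].
Qed.
Lemma ksub_horner P x : coefs_in S P -> S x -> S P.[x].
Proof.
by move=> SP Sx; rewrite horner_coef; apply: ksub_sum => i; apply: ksubM (ksubX _ Sx).
Qed.

Lemma khom_emb c : f (e c) = e c. Proof. by case: hf. Qed.
Lemma khom0 : f 0 = 0. Proof. by rewrite -(rmorph0 e) khom_emb. Qed.
Lemma khom1 : f 1 = 1. Proof. by rewrite -(rmorph1 e) khom_emb. Qed.
Lemma khomB x y : S x -> S y -> f (x - y) = f x - f y. Proof. by case: hf => _ + _; apply. Qed.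
Lemma khomM x y : S x -> S y -> f (x * y) = f x * f y. Proof. by case: hf => _ _; apply. Qed.
Lemma khomN x : S x -> f (- x) = - f x.
Proof. by move=> Sx; rewrite -sub0r khomB ?khom0 ?sub0r //; apply: ksub0. Qed.
Lemma khomD x y : S x -> S y -> f (x + y) = f x + f y.
Proof. by move=> Sx Sy; rewrite -[y]opprK khomB ?khomN ?opprK //; apply: ksubN. Qed.
Lemma khom_sum (I : Type) (r : seq I) (F : I -> K) :
  (forall i, S (F i)) -> f (\sum_(i <- r) F i) = \sum_(i <- r) f (F i).
Proof.
move=> SF; elim: r => [|a r IH]; first by rewrite !big_nil khom0.
by rewrite !big_cons khomD ?IH //; apply: ksub_sum.
Qed.

Lemma coefs_emb (q : {poly k}) : coefs_in S (map_poly e q).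
Proof. by move=> i; rewrite coef_map; apply: ksub_emb. Qed.
Lemma coefsC c : S c -> coefs_in S c%:P.
Proof. by move=> Sc i; rewrite coefC; case: eqP => _ //; apply: ksub0. Qed.
Lemma coefsXn n : coefs_in S 'X^n.
Proof. by move=> i; rewrite coefXn; case: eqP => _; [apply: ksub1 | apply: ksub0]. Qed.
Lemma coefsX : coefs_in S 'X.
Proof. by move=> i; rewrite coefX; case: eqP => _; [apply: ksub1 | apply: ksub0]. Qed.
Lemma coefsB P Q : coefs_in S P -> coefs_in S Q -> coefs_in S (P - Q).
Proof. by move=> SP SQ i; rewrite coefB; apply: ksubB. Qed.
Lemma coefsD P Q : coefs_in S P -> coefs_in S Q -> coefs_in S (P + Q).
Proof. by move=> SP SQ i; rewrite coefD; apply: ksubD. Qed.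
Lemma coefsM P Q : coefs_in S P -> coefs_in S Q -> coefs_in S (P * Q).
Proof. by move=> SP SQ i; rewrite coefM; apply: ksub_sum => j; apply: ksubM. Qed.
Lemma coefsZ c P : S c -> coefs_in S P -> coefs_in S (c *: P).
Proof. by move=> Sc SP i; rewrite coefZ; apply: ksubM. Qed.

Lemma coef_map_khom P i : (map_poly f P)`_i = f P`_i.
Proof. exact: coef_map_id0 khom0. Qed.
Lemma map_khomB P Q : coefs_in S P -> coefs_in S Q ->
  map_poly f (P - Q) = map_poly f P - map_poly f Q.
Proof. by move=> SP SQ; apply/polyP => i; rewrite coefB !coef_map_khom coefB khomB. Qed.
Lemma map_khomM P Q : coefs_in S P -> coefs_in S Q ->
  map_poly f (P * Q) = map_poly f P * map_poly f Q.
Proof.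
move=> SP SQ; apply/polyP => i; rewrite coefM coef_map_khom coefM khom_sum.
  by apply: eq_bigr => j _; rewrite !coef_map_khom khomM.
by move=> j; apply: ksubM.
Qed.
Lemma map_khomC c : map_poly f c%:P = (f c)%:P.
Proof. by apply/polyP => i; rewrite coef_map_khom !coefC; case: eqP; rewrite ?khom0. Qed.
Lemma map_khomX : map_poly f 'X = 'X.
Proof.
by apply/polyP => i; rewrite coef_map_khom !coefX; case: eqP; rewrite ?khom0 ?khom1.
Qed.
Lemma map_khom_emb (q : {poly k}) : map_poly f (map_poly e q) = map_poly e q.
Proof. by apply/polyP => i; rewrite coef_map_khom coef_map /= khom_emb. Qed.
End Closure.

Lemma ksub_divp_monic S mu P : ksubring S -> coefs_in S mu -> mu \is monic ->
  coefs_in S P ->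
  exists Q R, [/\ coefs_in S Q, coefs_in S R, P = Q * mu + R & (size R < size mu)%N].
Proof.
move=> hS Smu mmu SP; have smu : (0 < size mu)%N by rewrite lt0n size_poly_eq0 monic_neq0.
have lmu : mu`_(size mu).-1 = 1 by move/monicP: mmu; rewrite lead_coefE.
move: {2}(size P) (leqnn (size P)) => n; elim: n P SP => [|n IH] P SP szP.
  exists 0, P; rewrite mul0r add0r (leq_ltn_trans szP) //.
  by split=> //; apply: coefsC (ksub0 hS).
have [lt|ge] := ltnP (size P) (size mu).
  by exists 0, P; rewrite mul0r add0r; split=> //; apply: coefsC (ksub0 hS).
set d := (size P - size mu)%N; set c := lead_coef P.
set P' := P - c *: ('X^d * mu).
have Sc : S c by rewrite /c lead_coefE.
have SP' : coefs_in S P'.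
  by apply: coefsB => //; apply: coefsZ => //; apply: coefsM => //; apply: coefsXn.
have szP' : (size P' <= n)%N.
  suff : (size P' <= (size P).-1)%N by move: (size P') (size P) szP ge smu => *; lia.
  apply/leq_sizeP => j hj; rewrite /P' coefB coefZ coefXnM.
  have -> : (j < d)%N = false by apply/negbTE; rewrite -leqNgt /d; lia.
  have [->|jn] := eqVneq j (size P).-1.
    have -> : ((size P).-1 - d)%N = (size mu).-1 by rewrite /d; lia.
    by rewrite lmu mulr1 /c lead_coefE subrr.
  have jP : (size P <= j)%N by move: jn hj => /eqP; lia.
  rewrite (nth_default 0 jP) (nth_default 0) ?mulr0 ?subrr //.
  by move: jP ge; rewrite /d; move: (size P) (size mu) => x y; lia.
have [Q [R [SQ SR eP' sR]]] := IH P' SP' szP'.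
exists (Q + c *: 'X^d), R; split => //.
  by apply: coefsD => //; apply: coefsZ => //; apply: coefsXn.
by rewrite mulrDl addrAC -eP' /P' -scalerAl subrK.
Qed.

Lemma ksubringV S x : ksubring S ->
  (exists q : {poly k}, q != 0 /\ root (map_poly e q) x) -> S x -> S x^-1.
Proof.
move=> hS [q [q0 rq]] Sx; have [->|x0] := eqVneq x 0; first by rewrite invr0; apply: ksub0 hS.
have [g [[g0 rg] gmin]] := ex_min_measure (fun g : {poly k} => size g)
  (ex_intro (fun g => g != 0 /\ root (map_poly e g) x) q (conj q0 rq)).
set d := drop_poly 1 g.
have gE : g = (g`_0)%:P + d * 'X.
  rewrite -[in LHS](poly_take_drop 1 g) expr1; congr (_ + _).
  by apply/polyP => i; rewrite coef_take_poly coefC; case: i.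
have dx : (map_poly e g).[x] = e g`_0 + (map_poly e d).[x] * x.
  by rewrite {1}gE rmorphD rmorphM /= map_polyC map_polyX hornerD hornerMX hornerC.
have g00 : g`_0 != 0.
  apply: contraTneq isT => g00.
  have d0 : d != 0 by apply: contra_neq g0 => d0; rewrite gE g00 d0 mul0r addr0.
  have rd : root (map_poly e d) x.
    by move: rg; rewrite /root dx g00 rmorph0 add0r mulf_eq0 (negbTE x0) orbF.
  have := gmin d (conj d0 rd); rewrite size_drop_poly.
  by have := size_poly_gt0 g; rewrite g0; move: (size g) => m; lia.
have -> : x^-1 = - (e g`_0)^-1 * (map_poly e d).[x].
  have dxx : (map_poly e d).[x] * x = - e g`_0.
    by apply/eqP; rewrite -addr_eq0 addrC -dx.
  by apply: (mulIf x0); rewrite mulVf // -mulrA dxx mulrN mulNr opprK mulVf // fmorph_eq0.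
apply: (ksubM hS); first by apply: (ksubN hS); rewrite -fmorphV; apply: ksub_emb.
exact: (ksub_horner hS (coefs_emb hS d) Sx).
Qed.
End PartialHom.

Section SepClosure.
Variables (k K : fieldType) (e : {rmorphism k -> K}).
Hypothesis sepK : is_sep_closure e.

Lemma sep_algebraic x : exists q : {poly k}, q != 0 /\ root (map_poly e q) x.
Proof. by have [q [q0 _ rq]] := sepK.1 x; exists q. Qed.

Section MinPoly.
Variables (S : K -> Prop) (f : K -> K) (hS : ksubring e S) (hf : khom_on e S f) (a : K).

Definition minpoly_over (mu : {poly K}) :=
  [/\ coefs_in S mu, mu \is monic, root mu a,
      forall P, coefs_in S P -> root P a -> exists2 Q, coefs_in S Q & P = Q * mu
    & separable_poly (map_poly f mu)].

Lemma minpoly_over_exists : exists mu, minpoly_over mu.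
Proof.
have [q [q0 sq rq]] := sepK.1 a.
have Sq : coefs_in S (map_poly e q) /\ map_poly e q != 0 /\ root (map_poly e q) a.
  by split; [exact: coefs_emb | rewrite map_poly_eq0].
have [mu0 [[Smu0 [mu00 rmu0]] mu0min]] := ex_min_measure (fun P : {poly K} => size P)
  (ex_intro (fun P => coefs_in S P /\ P != 0 /\ root P a) _ Sq).
have lc0 : lead_coef mu0 != 0 by rewrite lead_coef_eq0.
set mu := (lead_coef mu0)^-1 *: mu0.
have Smu : coefs_in S mu.
  apply: (coefsZ hS) => //; apply: (ksubringV hS (sep_algebraic _)).
  by rewrite lead_coefE.
have mmu : mu \is monic by apply/monicP; rewrite lead_coefZ mulVf.
have rmu : root mu a by rewrite /root hornerZ (eqP rmu0) mulr0.
have mudvd P : coefs_in S P -> root P a -> exists2 Q, coefs_in S Q & P = Q * mu.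
  move=> SP rP; have [Q [R [SQ SR eP sR]]] := ksub_divp_monic hS Smu mmu SP.
  exists Q => //; suff R0 : R = 0 by rewrite eP R0 addr0.
  apply: contraTeq sR => R0; rewrite -leqNgt size_scale ?invr_eq0 //.
  apply: mu0min; split=> //; split=> //.
  by move: rP; rewrite /root eP hornerD hornerM (eqP rmu) mulr0 add0r.
exists mu; split => //.
have [Q SQ eq] := mudvd _ (coefs_emb hS q) rq.
have : map_poly f mu %| map_poly e q.
  by rewrite -(map_khom_emb hf q) eq (map_khomM hS hf) // dvdp_mulIr.
by move/dvdp_separable; apply; rewrite separable_map.
Qed.

Section Adjoin.
Variables (mu : {poly K}) (b : K).
Hypotheses (hmu : minpoly_over mu) (rb : root (map_poly f mu) b).

Definition adjoin z := exists P, coefs_in S P /\ z = P.[a].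

(* f extended to S[a] by a |-> b; the value outside S[a] is irrelevant. *)
Definition adjoin_hom z :=
  if pselect (adjoin z) is left H then (map_poly f (projT1 (cid H))).[b] else z.

Lemma adjoin_hom_wd P1 P2 : coefs_in S P1 -> coefs_in S P2 -> P1.[a] = P2.[a] ->
  (map_poly f P1).[b] = (map_poly f P2).[b].
Proof.
move=> S1 S2 eq; case: hmu => Smu _ _ mudvd _.
have [Q SQ eQ] : exists2 Q, coefs_in S Q & P1 - P2 = Q * mu.
  by apply: mudvd; [exact: (coefsB hS) | rewrite /root hornerD hornerN eq subrr].
apply/eqP; rewrite -subr_eq0 -hornerN -hornerD -(map_khomB hf) // eQ.
by rewrite (map_khomM hS hf) // hornerM (eqP rb) mulr0.
Qed.

Lemma adjoin_homE P : coefs_in S P -> adjoin_hom P.[a] = (map_poly f P).[b].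
Proof.
move=> SP; rewrite /adjoin_hom; case: pselect => [H|[]]; last by exists P.
by case: (cid H) => Q [SQ eQ] /=; apply: adjoin_hom_wd.
Qed.

Lemma adjoin_ksubring : ksubring e adjoin.
Proof.
split.
- by move=> c; exists (e c)%:P; split; [apply/(coefsC hS)/(ksub_emb hS) | rewrite hornerC].
- move=> _ _ [P [SP ->]] [Q [SQ ->]].
  by exists (P - Q); split; [exact: (coefsB hS) | rewrite hornerD hornerN].
- move=> _ _ [P [SP ->]] [Q [SQ ->]].
  by exists (P * Q); split; [exact: (coefsM hS) | rewrite hornerM].
Qed.

Lemma adjoin_khom : khom_on e adjoin adjoin_hom.
Proof.
split.
- move=> c; have := adjoin_homE (coefsC hS (ksub_emb hS c)).
  by rewrite !hornerC (map_khomC hf) hornerC (khom_emb hf) => ->.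
- move=> _ _ [P [SP ->]] [Q [SQ ->]]; rewrite -hornerN -hornerD !adjoin_homE //.
    by rewrite (map_khomB hf) // hornerD hornerN.
  exact: (coefsB hS).
- move=> _ _ [P [SP ->]] [Q [SQ ->]]; rewrite -hornerM !adjoin_homE //.
    by rewrite (map_khomM hS hf) // hornerM.
  exact: (coefsM hS).
Qed.

Lemma adjoin_sub z : S z -> adjoin z /\ adjoin_hom z = f z.
Proof.
move=> Sz; split; first by exists z%:P; split; [exact: (coefsC hS) | rewrite hornerC].
by rewrite -[z](hornerC z a) adjoin_homE ?(map_khomC hf) ?hornerC //; exact: (coefsC hS).
Qed.

Lemma adjoin_root : adjoin a /\ adjoin_hom a = b.
Proof.
split; first by exists 'X; split; [exact: (coefsX hS) | rewrite hornerX].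
by rewrite -[a]hornerX adjoin_homE ?(map_khomX hf) ?hornerX //; exact: (coefsX hS).
Qed.
End Adjoin.
End MinPoly.
End SepClosure.

Lemma inj_map_subset_eq (T : eqType) (s : T -> T) (u : seq T) :
  injective s -> uniq u -> {subset map s u <= u} -> map s u =i u.
Proof.
move=> injs uu sub.
by have [] := uniq_min_size (etrans (map_inj_uniq injs u) uu) sub; rewrite ?size_map.
Qed.

Lemma monic_root_size_gt1 (K : fieldType) (mu : {poly K}) a :
  mu \is monic -> root mu a -> (1 < size mu)%N.
Proof.
move=> mmu rmu; rewrite ltnNge; apply/negP => le.
have mu1 : mu = 1 by move/monicP: mmu; rewrite (size1_polyC le) lead_coefC => ->.
by move: rmu; rewrite mu1 /root hornerC oner_eq0.
Qed.

Lemma roots_finite (K : fieldType) (P : {poly K}) : P != 0 ->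
  exists rs : seq K, uniq rs /\ forall z, root P z = (z \in rs).
Proof.
move: {2}(size P) (leqnn (size P)) => n; elim: n P => [|n IH] P szP P0.
  by move: szP; rewrite leqn0 size_poly_eq0 (negbTE P0).
have [[a ra]|noroot] := pselect (exists a, root P a); last first.
  by exists [::]; split=> // z; apply/negP => rz; apply: noroot; exists z.
have [Q PE] := factor_theorem P a ra.
have Q0 : Q != 0 by apply: contraNneq P0 => Q0; rewrite PE Q0 mul0r.
have szQ : (size Q <= n)%N.
  by move: szP; rewrite PE size_mul ?size_XsubC ?polyXsubC_eq0 // addn2.
have [rs [urs rsE]] := IH Q szQ Q0.
exists (undup (a :: rs)); split; first exact: undup_uniq.
by move=> z; rewrite mem_undup in_cons PE rootM root_XsubC -rsE orbC eq_sym.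
Qed.

Section Extension.
Variables (k K : fieldType) (e : {rmorphism k -> K}).
Hypothesis sepK : is_sep_closure e.

Definition kpartial (t : (K -> Prop) * (K -> K)) := ksubring e t.1 /\ khom_on e t.1 t.2.

Definition extends (t u : (K -> Prop) * (K -> K)) :=
  forall z, t.1 z -> u.1 z /\ u.2 z = t.2 z.

Lemma extends_refl t : extends t t. Proof. by []. Qed.

Lemma extends_trans t u v : extends t u -> extends u v -> extends t v.
Proof.
move=> htu huv z tz; have [uz <-] := htu z tz; exact: huv.
Qed.

Lemma kpartial_extend1 t a : kpartial t -> exists u, [/\ kpartial u, extends t u & u.1 a].
Proof.
case=> hS hf; have [mu hmu] := minpoly_over_exists sepK hS hf a.
have [_ mmu rmu _ smu] := hmu.
have [b rb] : exists b, root (map_poly t.2 mu) b.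
  apply: sepK.2 => //; rewrite size_map_poly_id0; first exact: monic_root_size_gt1 rmu.
  by move/monicP: mmu => ->; rewrite (khom1 hf) oner_eq0.
exists (adjoin t.1 a, adjoin_hom t.1 t.2 a b); split.
- exact: (conj (adjoin_ksubring hS a) (adjoin_khom hS hf hmu rb)).
- move=> z; exact: (adjoin_sub hS hf hmu rb).
- exact: (adjoin_root hS hf hmu rb).1.
Qed.

Lemma kpartial_chain_ub (A : set ((K -> Prop) * (K -> K))) t0 :
  A t0 -> (forall t, A t -> kpartial t) -> total_on A extends ->
  exists2 u, kpartial u & forall t, A t -> extends t u.
Proof.
move=> At0 Apart Atot.
pose U1 z := exists t, A t /\ t.1 z.
pose U2 z := if pselect (U1 z) is left H then (projT1 (cid H)).2 z else z.
have U2E t z : A t -> t.1 z -> U2 z = t.2 z.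
  move=> At tz; rewrite /U2; case: pselect => [H|[]]; last by exists t.
  case: (cid H) => u [Au uz] /=.
  by case: (Atot t u At Au) => htu; [have [_ ->] := htu z tz | have [_ ->] := htu z uz].
have common z1 z2 : U1 z1 -> U1 z2 -> exists t, [/\ A t, t.1 z1 & t.1 z2].
  move=> [t1 [A1 h1]] [t2 [A2 h2]].
  case: (Atot t1 t2 A1 A2) => h.
    by exists t2; split => //; have [] := h z1 h1.
  by exists t1; split => //; have [] := h z2 h2.
have hU : kpartial (U1, U2).
  have [[S0e _ _] [f0e _ _]] := Apart t0 At0.
  split; split.
  - by move=> c; exists t0; split.
  - move=> z1 z2 U1z1 U1z2; have [t [At t1 t2]] := common z1 z2 U1z1 U1z2.
    by exists t; split => //; apply: (ksubB (Apart t At).1).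
  - move=> z1 z2 U1z1 U1z2; have [t [At t1 t2]] := common z1 z2 U1z1 U1z2.
    by exists t; split => //; apply: (ksubM (Apart t At).1).
  - by move=> c; rewrite /= (U2E t0) ?f0e.
  - move=> z1 z2 U1z1 U1z2; have [t [At t1 t2]] := common z1 z2 U1z1 U1z2.
    have [hS hf] := Apart t At.
    by rewrite /= !(U2E t) //; [exact: khomB hf _ _ t1 t2 | exact: ksubB hS _ _ t1 t2].
  - move=> z1 z2 U1z1 U1z2; have [t [At t1 t2]] := common z1 z2 U1z1 U1z2.
    have [hS hf] := Apart t At.
    by rewrite /= !(U2E t) //; [exact: khomM hf _ _ t1 t2 | exact: ksubM hS _ _ t1 t2].
exists (U1, U2) => // t At z tz; split; first by exists t.
by rewrite /= (U2E t).
Qed.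

Lemma kpartial_total t0 : kpartial t0 ->
  exists f, khom_on e (fun=> True) f /\ forall z, t0.1 z -> f z = t0.2 z.
Proof.
move=> ht0.
pose T := {t | kpartial t /\ extends t0 t}.
pose R (x y : T) := `[< extends (sval x) (sval y) >].
have [||A Atot|t tmax] := @ZL_preorder T (exist _ t0 (conj ht0 (@extends_refl t0))) R.
- by move=> t; apply/asboolP/(@extends_refl (sval t)).
- by move=> r s t /asboolP rs /asboolP st; apply/asboolP/(extends_trans rs st).
- pose A' t := t = t0 \/ exists2 x, A x & sval x = t.
  have [u hu Au] : exists2 u, kpartial u & forall t, A' t -> extends t u.
    apply: (kpartial_chain_ub (t0 := t0)); first by left.
      by move=> _ [->|[x _ <-]] //; case: (svalP x).
    move=> _ _ [->|[x Ax <-]] [->|[y Ay <-]]; try by left.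
    - by left; case: (svalP y).
    - by right; case: (svalP x).
    - by case: (Atot x y Ax Ay) => /asboolP; [left | right].
  exists (exist _ u (conj hu (Au t0 (or_introl erefl)))) => x Ax.
  by apply/asboolP/Au; right; exists x.
have [[hS hf] ext0] := svalP t.
have tT z : (sval t).1 z.
  have [u [hu htu uz]] := kpartial_extend1 z (conj hS hf).
  have /tmax /asboolP /(_ z uz) [] // : R t (exist _ u (conj hu (extends_trans ext0 htu))).
  exact/asboolP.
exists (sval t).2; split; last by move=> z /ext0 [].
by case: hf => he hB hM; split => // x y _ _; [apply: hB | apply: hM].
Qed.

Lemma khom_surj (s : {rmorphism K -> K}) : (forall c, s (e c) = e c) ->
  forall w, exists z, s z = w.
Proof.
move=> se w; have [q [q0 rq]] := sep_algebraic sepK w.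
have [rs [urs rsE]] : exists rs, uniq rs /\ forall z, root (map_poly e q) z = (z \in rs).
  by apply: roots_finite; rewrite map_poly_eq0.
have sq : map_poly s (map_poly e q) = map_poly e q.
  by rewrite -map_poly_comp; apply: eq_map_poly => c /=; rewrite se.
have sub : {subset map s rs <= rs}.
  move=> _ /mapP [y yr ->]; rewrite -rsE /root -sq horner_map.
  by move: yr; rewrite -rsE /root => /eqP ->; rewrite rmorph0.
have : w \in map s rs by rewrite (inj_map_subset_eq (fmorph_inj s) urs sub) -rsE.
by case/mapP => z _ ->; exists z.
Qed.

Lemma kpartial_Gk t0 : kpartial t0 ->
  exists s : {rmorphism K -> K}, in_Gk e s /\ forall z, t0.1 z -> s z = t0.2 z.
Proof.
move=> /kpartial_total [f [[fe fB fM] ft0]].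
have f1 : f 1 = 1 by rewrite -(rmorph1 e) fe.
pose s : {rmorphism K -> K} := HB.pack_for {rmorphism K -> K} f
  (GRing.isZmodMorphism.Build K K f (fun x y => fB x y I I))
  (GRing.isMonoidMorphism.Build K K f (conj f1 (fun x y => fM x y I I))).
exists s; split=> //; split; last exact: fe.
have surj := khom_surj (s := s) fe.
exists (fun w => sval (cid (surj w))) => z; last exact: svalP (cid (surj z)).
by apply: (fmorph_inj s); exact: svalP (cid (surj (s z))).
Qed.

Lemma kpartial_base : kpartial ((fun z => exists c, z = e c), id).
Proof.
split; split => //=.
- by move=> c; exists c.
- by move=> _ _ [c1 ->] [c2 ->]; exists (c1 - c2); rewrite rmorphB.
- by move=> _ _ [c1 ->] [c2 ->]; exists (c1 * c2); rewrite rmorphM.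
Qed.

Lemma Gk_fixed_rational x : (forall s, in_Gk e s -> s x = x) -> exists c, x = e c.
Proof.
move=> xfix; apply: contrapT => xnk.
have [hS hf] := kpartial_base.
have [mu hmu] := minpoly_over_exists sepK hS hf x.
have [Smu mmu rmu _ smu] := hmu.
have idmu : map_poly id mu = mu by apply: map_poly_id.
have [q muE] := factor_theorem mu x rmu.
have q1 : (1 < size q)%N.
  rewrite ltnNge; apply/negP => le.
  have q_1 : q = 1.
    move/monicP: mmu; rewrite muE lead_coefM lead_coefXsubC mulr1.
    by rewrite (size1_polyC le) lead_coefC => ->.
  have [c xc] := Smu 0%N; apply: xnk; exists (- c).
  by rewrite rmorphN -xc muE q_1 mul1r coefB coefX coefC sub0r opprK.
have /andP [sepq qx] : separable_poly q && ~~ root q x.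
  by rewrite -separable_root -muE -idmu.
have [y qy] := sepK.2 q sepq q1.
have rb : root (map_poly id mu) y by rewrite idmu muE rootM qy.
have [s [Gs sE]] := kpartial_Gk (t0 := (adjoin _ x, adjoin_hom _ id x y))
  (conj (adjoin_ksubring hS x) (adjoin_khom hS hf hmu rb)).
have [adx sx] := adjoin_root hS hf hmu rb.
by move: qx; rewrite -(xfix s Gs) sE //= sx qy.
Qed.
End Extension.

Lemma interpolation_exists (K : fieldType) (u : seq K) (g : K -> K) : uniq u ->
  exists A : {poly K}, (size A <= size u)%N /\ forall w, w \in u -> A.[w] = g w.
Proof.
elim: u => [|w0 u IH] /=; first by move=> _; exists 0; rewrite size_poly0.
case/andP => w0u uu; have [A [szA AE]] := IH uu.
pose Z := \prod_(v <- u) ('X - v%:P).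
have Zw0 : Z.[w0] != 0 by rewrite -/(root Z w0) root_prod_XsubC.
exists (A + ((g w0 - A.[w0]) / Z.[w0]) *: Z); split.
  apply: (leq_trans (size_polyD _ _)); rewrite geq_max (leq_trans szA) //=.
  by rewrite (leq_trans (size_scale_leq _ _)) // size_prod_XsubC.
move=> w; rewrite in_cons => /orP [/eqP ->|wu].
  by rewrite hornerD hornerZ divfK // addrC subrK.
have : root Z w by rewrite root_prod_XsubC.
by rewrite hornerD hornerZ /root => /eqP ->; rewrite mulr0 addr0 AE.
Qed.

Lemma interpolation_unique (K : fieldType) (u : seq K) (A B : {poly K}) : uniq u ->
  (size A <= size u)%N -> (size B <= size u)%N ->
  (forall w, w \in u -> A.[w] = B.[w]) -> A = B.
Proof.
move=> uu szA szB AB; apply/eqP; rewrite -subr_eq0; apply/negPn/negP => AB0.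
have /(max_poly_roots AB0) : all (root (A - B)) u.
  by apply/allP => w wu; rewrite /root hornerD hornerN AB // subrr.
move=> /(_ uu); rewrite ltnNge (leq_trans (size_polyD _ _)) //.
by rewrite size_polyN geq_max szA szB.
Qed.

Section Descent.
Variables (k K : fieldType) (e : {rmorphism k -> K}).
Hypothesis sepK : is_sep_closure e.

Lemma Gk_map_emb (s : {rmorphism K -> K}) (q : {poly k}) : in_Gk e s ->
  map_poly s (map_poly e q) = map_poly e q.
Proof. by case=> _ se; rewrite -map_poly_comp; apply: eq_map_poly => c /=; rewrite se. Qed.

Lemma Gk_horner_emb (s : {rmorphism K -> K}) (q : {poly k}) w : in_Gk e s ->
  s (map_poly e q).[w] = (map_poly e q).[s w].
Proof. by move=> Gs; rewrite -horner_map Gk_map_emb. Qed.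

(* Interpolate g on the roots; the interpolating polynomial is G_k-invariant by
   uniqueness, so its coefficients are rational. *)
Lemma Gk_equivariant_descent (rts : seq K) (g : K -> K) :
  (forall s, in_Gk e s -> forall w, w \in rts -> s w \in rts) ->
  (forall s, in_Gk e s -> forall w, w \in rts -> s (g w) = g (s w)) ->
  exists a : {poly k}, forall w, w \in rts -> (map_poly e a).[w] = g w.
Proof.
move=> stab comm; set u := undup rts; have uu : uniq u := undup_uniq rts.
have [A [szA AE]] := interpolation_exists g uu.
have Afix s : in_Gk e s -> map_poly s A = A.
  move=> Gs; apply: (interpolation_unique uu) => //.
    by rewrite size_map_inj_poly ?rmorph0 //; exact: fmorph_inj.
  have sub : {subset map s u <= u}.
    by move=> _ /mapP [y yu ->]; rewrite mem_undup stab // -mem_undup.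
  have su := inj_map_subset_eq (fmorph_inj s) uu sub.
  move=> w; rewrite -su => /mapP [y yu ->].
  rewrite horner_map (AE y) // AE; last by rewrite -su map_f.
  by apply: comm => //; rewrite -mem_undup.
have Ak i : exists c, A`_i = e c.
  by apply: (Gk_fixed_rational sepK) => s Gs; rewrite -{2}(Afix s Gs) coef_map.
exists (\poly_(i < size A) sval (cid (Ak i))) => w wr.
have -> : map_poly e (\poly_(i < size A) sval (cid (Ak i))) = A.
  apply/polyP => i; rewrite coef_map coef_poly /=.
  by case: ltnP => hi; [rewrite -(svalP (cid (Ak i))) | rewrite rmorph0 nth_default].
by rewrite AE // mem_undup.
Qed.
End Descent.

Lemma XsubC_count_dvd_prod (K : fieldType) (rts : seq K) w :
  ('X - w%:P) ^+ count_mem w rts %| \prod_(a <- rts) ('X - a%:P).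
Proof.
rewrite (bigID (fun a => a == w)) /=; apply: dvdp_mulr.
rewrite (eq_bigr (fun _ => 'X - w%:P)); last by move=> a /eqP ->.
by rewrite big_const_seq iter_mulr_1 (eq_count (a2 := pred1 w)) // => a; rewrite /= eq_sym.
Qed.

Section Multiplicity.
Variables (k K : fieldType) (e : {rmorphism k -> K}).

Lemma kminpoly_exists w :
  (exists q : {poly k}, [/\ q != 0, separable_poly q & root (map_poly e q) w]) ->
  exists g : {poly k}, [/\ g != 0, separable_poly g, root (map_poly e g) w
    & forall P, root (map_poly e P) w -> g %| P].
Proof.
move=> [q [q0 sq rq]].
have [g [[g0 rg] gmin]] := ex_min_measure (fun P : {poly k} => size P)
   (ex_intro (fun P => P != 0 /\ root (map_poly e P) w) q (conj q0 rq)).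
have gdvd P : root (map_poly e P) w -> g %| P.
  move=> rP; apply/modp_eq0P/eqP/negPn/negP => r0.
  have rr : root (map_poly e (P %% g)) w.
    move: rP; rewrite map_modp /root {1}(divp_eq (map_poly e P) (map_poly e g)).
    by rewrite hornerD hornerM (eqP rg) mulr0 add0r.
  by have := gmin _ (conj r0 rr); rewrite leqNgt ltn_modp g0.
by exists g; split => //; apply: dvdp_separable sq; apply: gdvd.
Qed.

(* w is a simple root of map_poly e g, so each factor 'X - w of map_poly e H
   accounts for a whole factor g of H. *)
Lemma XsubC_expn_dvd_map (g : {poly k}) w j (H : {poly k}) :
  separable_poly g -> root (map_poly e g) w ->
  (forall P, root (map_poly e P) w -> g %| P) ->
  ('X - w%:P) ^+ j %| map_poly e H -> g ^+ j %| H.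
Proof.
move=> sg rg gdvd; have [G' gE] := factor_theorem _ _ rg.
have G'w : ~~ root G' w.
  by move: sg; rewrite -(separable_map e) gE separable_root => /andP [].
have cG' : coprimep ('X - w%:P) G' by rewrite coprimep_sym coprimep_XsubC.
elim: j H => [|j IH] H; first by move=> _; rewrite expr0 dvd1p.
move=> Hdvd; have rH : root (map_poly e H) w.
  by rewrite -dvdp_XsubCl (dvdp_trans _ Hdvd) // exprS dvdp_mulr.
have gH := gdvd _ rH; rewrite -(divpK gH) in Hdvd *.
rewrite exprSr dvdp_mul // IH //.
move: Hdvd; rewrite rmorphM /= gE mulrA exprSr dvdp_mul2r ?polyXsubC_eq0 //.
by rewrite Gauss_dvdpl // coprimep_expl // coprimep_sym.
Qed.

Lemma pth_power_free_count_lt (p : nat) (h : {poly k}) (rts : seq K) w :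
  (exists q : {poly k}, [/\ q != 0, separable_poly q & root (map_poly e q) w]) ->
  pth_power_free p h -> map_poly e h = \prod_(a <- rts) ('X - a%:P) ->
  w \in rts -> (count_mem w rts < p)%N.
Proof.
move=> walg hfree hE wr; rewrite ltnNge; apply/negP => pw.
have [g [g0 sg rg gdvd]] := kminpoly_exists walg.
have /hfree g1 : g ^+ p %| h.
  apply: (XsubC_expn_dvd_map sg rg gdvd).
  by rewrite hE (dvdp_trans _ (XsubC_count_dvd_prod rts w)) // dvdp_exp2l.
have g00 : g`_0 != 0 by rewrite (size1_polyC g1) polyC_eq0 in g0.
by move: rg; rewrite (size1_polyC g1) map_polyC /root hornerC fmorph_eq0 (negbTE g00).
Qed.
End Multiplicity.

Section Norm.
Variables (K : fieldType) (rts : seq K).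

Lemma eq_Nbar (b1 b2 : K -> K) :
  (forall w, w \in rts -> b1 w = b2 w) -> Nbar rts b1 = Nbar rts b2.
Proof. exact: eq_big_seq. Qed.
Lemma NbarM (b1 b2 : K -> K) :
  Nbar rts (fun w => b1 w * b2 w) = Nbar rts b1 * Nbar rts b2.
Proof. exact: big_split. Qed.
Lemma NbarX (b : K -> K) n : Nbar rts (fun w => b w ^+ n) = Nbar rts b ^+ n.
Proof. exact: prodrXl. Qed.
Lemma Nbar_cst c : Nbar rts (fun=> c) = c ^+ size rts.
Proof. by rewrite /Nbar big_const_seq iter_mulr_1 count_predT. Qed.
Lemma Nbar_neq0 (b : K -> K) : (forall w, w \in rts -> b w != 0) -> Nbar rts b != 0.
Proof. by move=> b0; rewrite /Nbar prodf_seq_neq0; apply/allP => w /b0. Qed.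
End Norm.

Section Coset.
Variables (K : fieldType) (p : nat) (rts : seq K) (zeta : K) (w0 : K).
Hypotheses (p_prime : prime p) (zeta_prim : p.-primitive_root zeta).
Hypothesis pth_root : forall a : K, a != 0 -> exists b, b ^+ p = a.
Hypotheses (w0_rts : w0 \in rts) (w0_mult : (count_mem w0 rts < p)%N).

(* Since w0 has multiplicity prime to p, a root of unity placed at w0 alone
   realizes any p-th root of unity as a norm. *)
Lemma Nbar_root_of_unity rho : rho ^+ p = 1 ->
  exists delta : K -> K, (forall w, delta w ^+ p = 1) /\ Nbar rts delta = rho.
Proof.
move=> rhop; set c0 := count_mem w0 rts.
have c0p : coprime c0 p.
  rewrite coprime_sym prime_coprime // gtnNdvd //.
  by rewrite /c0 -has_count; apply/hasP; exists w0 => /=.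
have zc0 : p.-primitive_root (zeta ^+ c0) by rewrite prim_root_exp_coprime.
have [i rhoE] := prim_rootP zc0 rhop.
exists (fun w => if w == w0 then zeta ^+ i else 1); split.
  move=> w; case: ifP => _; last exact: expr1n.
  by rewrite -exprM mulnC exprM (prim_expr_order zeta_prim) expr1n.
rewrite rhoE /Nbar -big_mkcond /= big_const_seq iter_mulr_1 -exprM mulnC exprM.
by rewrite (eq_count (a2 := pred1 w0)) // => a; rewrite /= eq_sym.
Qed.

Lemma in_coset_norm (C : K) (fD m : Mbar K) :
  unit_Mbar rts fD -> C * Nbar rts fD.1 = fD.2 ^+ p ->
  in_coset p rts fD m <-> unit_Mbar rts m /\ C * Nbar rts m.1 = m.2 ^+ p.
Proof.
move=> [fD1 fD2] fDnorm; have p0 : (0 < p)%N := prime_gt0 p_prime.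
split.
  case=> b [b0 m1E m2E]; split; first split.
  - by move=> w wr; rewrite m1E // mulf_neq0 ?fD1 // expf_neq0 ?b0.
  - by rewrite m2E mulf_neq0 ?Nbar_neq0.
  by rewrite (eq_Nbar m1E) NbarM NbarX mulrA fDnorm m2E exprMn.
case=> -[m1 m2] mnorm.
have b0E w : exists b, w \in rts -> b ^+ p = m.1 w / fD.1 w.
  have [w_rts|] := boolP (w \in rts); last by exists 0.
  have [b bE] := pth_root (mulf_neq0 (m1 w w_rts) (invr_neq0 (fD1 w w_rts))).
  by exists b.
pose b0 w := sval (cid (b0E w)).
have b0p w : w \in rts -> b0 w ^+ p = m.1 w / fD.1 w := svalP (cid (b0E w)).
have b00 w : w \in rts -> b0 w != 0.
  move=> wr; apply/eqP => b0w; move: (b0p w wr); rewrite b0w expr0n (gtn_eqF p0).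
  by move/esym/eqP; rewrite mulf_eq0 invr_eq0 (negbTE (m1 w wr)) (negbTE (fD1 w wr)).
have N0 : fD.2 * Nbar rts b0 != 0 by rewrite mulf_neq0 ?Nbar_neq0.
set rho := m.2 / (fD.2 * Nbar rts b0).
have rhop : rho ^+ p = 1.
  have m1E : Nbar rts m.1 = Nbar rts fD.1 * Nbar rts (fun w => b0 w ^+ p).
    by rewrite -NbarM; apply: eq_Nbar => w wr; rewrite b0p // mulrC divfK ?fD1.
  rewrite /rho exprMn exprVn -mnorm exprMn -fDnorm m1E NbarX mulrA divff //.
  by rewrite fDnorm -exprMn expf_neq0.
have [delta [deltap Ndelta]] := Nbar_root_of_unity rhop.
have delta0 w : delta w != 0.
  by apply: contra_eq_neq (deltap w) => ->; rewrite expr0n (gtn_eqF p0) eq_sym oner_neq0.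
exists (fun w => b0 w * delta w); split.
- by move=> w wr; rewrite mulf_neq0 ?b00.
- by move=> w wr; rewrite exprMn deltap mulr1 b0p // mulrC divfK ?fD1.
by rewrite NbarM Ndelta /rho mulrA mulrCA divff ?mulr1.
Qed.
End Coset.

Lemma deg_dom_sum (T : choiceType) (D : {freeg T / int}) :
  deg D = \sum_(z <- dom D) coeff z D.
Proof. by rewrite -{1}(freeg_sumE D) raddf_sum; apply: eq_bigr => z _; exact: degU. Qed.

Section Divisor.
Variables (K : fieldType) (p : nat) (cb : K) (rts : seq K) (D : {freeg (K * K)}).
Let hb := \prod_(a <- rts) ('X - a%:P).
Hypothesis D_good : good_div p cb hb D.

Lemma good_div_point P : P \in dom D ->
  [/\ P.2 != 0, P.2 ^+ p = cb * hb.[P.1] & forall w, w \in rts -> P.1 - w != 0].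
Proof.
move=> PD; have /andP [P20 /eqP P2p] := allP D_good P PD; split => // w wr.
rewrite subr_eq0; apply: contra_neq P20 => P1w; apply/eqP.
have hb0 : hb.[P.1] = 0 by rewrite P1w; apply/eqP; rewrite -/(root hb w) root_prod_XsubC.
by move/eqP: P2p; rewrite hb0 mulr0 expf_eq0 => /andP [].
Qed.

Lemma fdiv_unit : unit_Mbar rts (fdiv D).
Proof.
split => [w wr|]; rewrite /fdiv /= big_seq prodf_seq_neq0; apply/allP => P _;
  apply/implyP => /good_div_point [P20 _ P1w]; rewrite expfz_eq0 negb_and ?P1w ?P20 ?orbT //.
Qed.

Lemma fdiv_norm r : cb != 0 -> deg D = r ->
  cb ^ r * Nbar rts (fdiv D).1 = (fdiv D).2 ^+ p.
Proof.
move=> cb0 <-; rewrite /fdiv /= -prodrXl big_seq.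
rewrite (eq_bigr (fun P => cb ^ coeff P D * hb.[P.1] ^ coeff P D)); last first.
  move=> P /good_div_point [_ P2p _]; rewrite -expfzMl -P2p.
  by change ((P.2 ^ coeff P D) ^ p%:Z = (P.2 ^ p%:Z) ^ coeff P D); apply: exprzAC.
rewrite -big_seq big_split /= -(big_morph _ (fun m n => expfzDr m n cb0) (expr0z cb)).
rewrite -deg_dom_sum; congr (_ * _); rewrite /Nbar exchange_big; apply: eq_bigr => P _.
rewrite /hb horner_prod -(big_morph _ (fun x y => expfzMl x y _) (exp1rz _ _)).
by congr (_ ^ _); apply: eq_bigr => a _; rewrite hornerXsubC.
Qed.
End Divisor.

Lemma separable_XnsubC (R : fieldType) n (c : R) :
  n%:R != 0 :> R -> c != 0 -> separable_poly ('X^n - c%:P).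
Proof.
case: n => [/eqP// | n nz_n] c0; rewrite unlock linearB /= derivC subr0.
rewrite derivXn -scaler_nat coprimepZr //= exprS -polyCN -alg_polyC coprimep_sym.
by rewrite coprimep_addl_mul coprimepZr ?coprimep1 // oppr_eq0.
Qed.

Lemma coprimep_prod_XsubC (K : fieldType) (P : {poly K}) (rts : seq K) :
  (forall w, w \in rts -> ~~ root P w) -> coprimep P (\prod_(a <- rts) ('X - a%:P)).
Proof.
elim: rts => [|a rts IH] Pr; first by rewrite big_nil coprimep1.
rewrite big_cons coprimepMr coprimep_XsubC Pr ?mem_head //=.
by apply: IH => w wr; rewrite Pr // in_cons wr orbT.
Qed.

Section Curve.
Variables (p : nat) (k kbar : fieldType) (emb : {rmorphism k -> kbar}).
Variables (c : k) (h : {poly k}) (rts : seq kbar).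
Hypotheses (p_prime : prime p) (p_char : ~~ (p \in [pchar k])).
Hypotheses (kclos : is_sep_closure emb) (c0 : c != 0) (h_free : pth_power_free p h).
Hypothesis hE : map_poly emb h = \prod_(a <- rts) ('X - a%:P).
Let n := (size h).-1.
Let cb := emb c.

Lemma size_roots : size rts = n.
Proof.
have := size_prod_XsubC rts id; rewrite -hE size_map_inj_poly ?rmorph0 //.
  by rewrite /n => ->.
exact: fmorph_inj.
Qed.

Lemma pth_root_kbar (a : kbar) : a != 0 -> exists b, b ^+ p = a.
Proof.
move=> a0; have p0 : p%:R != 0 :> kbar.
  by rewrite -(rmorph_nat emb) fmorph_eq0; apply: contra p_char => p0; apply/andP.
have [b] : exists b, root ('X^p - a%:P) b.
  by apply: kclos.2; rewrite ?separable_XnsubC ?size_XnsubC ?ltnS ?prime_gt0.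
move=> rb; exists b; move: rb.
by rewrite /root hornerD hornerN hornerXn hornerC subr_eq0 => /eqP.
Qed.

Lemma in_fdiv_cosetE (zeta : k) (r : int) D :
  p.-primitive_root zeta -> (0 < n)%N -> good_div p cb (map_poly emb h) D -> deg D = r ->
  forall m, in_coset p rts (fdiv D) m <-> unit_Mbar rts m /\ cb ^ r * Nbar rts m.1 = m.2 ^+ p.
Proof.
move=> zeta_prim n0 gD dD m; rewrite hE in gD.
have [w0 w0r] : exists w0, w0 \in rts.
  by move: n0; rewrite -size_roots; case: (rts) => // w0 ?; exists w0; rewrite mem_head.
have w0_mult := pth_power_free_count_lt (kclos.1 w0) h_free hE w0r.
have cb0 : cb != 0 by rewrite fmorph_eq0.
have zprim : p.-primitive_root (emb zeta) by rewrite fmorph_primitive_root.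
exact: (in_coset_norm p_prime zprim pth_root_kbar w0r w0_mult m (fdiv_unit gD)
  (fdiv_norm gD cb0 dD)).
Qed.

Lemma Gk_roots s : in_Gk emb s -> forall w, w \in rts -> s w \in rts.
Proof.
move=> Gs w; rewrite -!root_prod_XsubC -hE /root -Gk_horner_emb // => /eqP ->.
by rewrite rmorph0.
Qed.

Lemma Gk_Nbar_Lemb s (al : {poly k}) : in_Gk emb s ->
  s (Nbar rts (Lemb emb al)) = Nbar rts (Lemb emb al).
Proof.
move=> Gs; have perm_rts : perm_eq (map s rts) rts.
  by apply: prod_XsubC_eq; rewrite big_map -map_prod_XsubC -hE Gk_map_emb.
rewrite /Nbar rmorph_prod; under eq_bigr => w _ do rewrite /Lemb Gk_horner_emb //.
by rewrite -(big_map s xpredT (fun w => (map_poly emb al).[w])) (perm_big _ perm_rts).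
Qed.

(* The image in M̄ of the class of (a, s) in H^r_k, multiplied by the element
   iota(g) ∂(al) of iota(k^x) ∂(L^x). *)
Definition Hr_image (r : int) (m : Mbar kbar) :=
  exists (a : {poly k}) (s g : k) (al : {poly k}),
    [/\ coprimep a h, s != 0, g != 0 & coprimep al h] /\
    [/\ cb ^ r * Nbar rts (Lemb emb a) = emb s ^+ p,
        forall w, w \in rts -> m.1 w = Lemb emb a w * emb g * Lemb emb al w ^+ p
      & m.2 = emb s * emb g ^+ (n %/ p) * Nbar rts (Lemb emb al)].

Lemma Hr_image_fixed r m : Hr_image r m -> forall s, in_Gk emb s -> fixed_by rts s m.
Proof.
case=> a [s0 [g [al [_ [_ m1E m2E]]]]] s Gs; have [_ se] := Gs; split.
  by move=> w wr; rewrite !m1E ?Gk_roots // !rmorphM rmorphXn se !Gk_horner_emb.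
by rewrite m2E !rmorphM rmorphXn !se Gk_Nbar_Lemb.
Qed.

Lemma Hr_image_norm r m : (p %| n)%N -> Hr_image r m -> cb ^ r * Nbar rts m.1 = m.2 ^+ p.
Proof.
move=> pn [a [s [g [al [_ [aN m1E m2E]]]]]].
rewrite (eq_Nbar m1E) !NbarM NbarX Nbar_cst size_roots m2E !exprMn -exprM divnK //.
by rewrite !mulrA aN.
Qed.

Lemma Gk_fixed_Hr_image r m : unit_Mbar rts m ->
  (forall s, in_Gk emb s -> fixed_by rts s m) -> cb ^ r * Nbar rts m.1 = m.2 ^+ p ->
  Hr_image r m.
Proof.
move=> [m1 m2] mfix mN.
have [s0 m2E] := Gk_fixed_rational kclos (fun s Gs => (mfix s Gs).2).
have [a m1E] := Gk_equivariant_descent kclos (Gk_roots) (fun s Gs => (mfix s Gs).1).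
have Lemb1 w : Lemb emb 1 w = 1 by rewrite /Lemb rmorph1 hornerC.
exists a, s0, 1, 1; split; split.
- rewrite -(coprimep_map emb) hE; apply: coprimep_prod_XsubC => w wr.
  by rewrite /root m1E // m1.
- by move: m2; rewrite m2E fmorph_eq0.
- exact: oner_neq0.
- exact: coprime1p.
- by rewrite (eq_Nbar m1E) mN m2E.
- by move=> w wr; rewrite Lemb1 expr1n rmorph1 !mulr1 /Lemb m1E.
- by rewrite rmorph1 expr1n mulr1 (eq_Nbar (fun w _ => Lemb1 w)) Nbar_cst expr1n mulr1.
Qed.
End Curve.
Unset Implicit Arguments.

Theorem lemma4p3 (p : nat) (k kbar : fieldType) (emb : {rmorphism k -> kbar})
  (c : k) (h : {poly k}) (rts : seq kbar) (r : int) :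
  prime p -> ~~ (p \in [pchar k]) ->
  (exists z : k, p.-primitive_root z) ->
  is_sep_closure emb ->
  c != 0 -> h \is monic -> pth_power_free p h ->
  (0 < (size h).-1)%N -> (p %| (size h).-1)%N ->
  map_poly emb h = \prod_(a <- rts) ('X - a%:P) ->
  let n := (size h).-1 in
  let cb := emb c in
  let hb := map_poly emb h in
  (forall D D' : {freeg (kbar * kbar)},
     good_div p cb hb D -> good_div p cb hb D' -> deg D = r -> deg D' = r ->
     forall m : Mbar kbar, in_coset p rts (fdiv D) m <-> in_coset p rts (fdiv D') m)
  /\
  (forall D : {freeg (kbar * kbar)}, good_div p cb hb D -> deg D = r ->
   forall m : Mbar kbar, unit_Mbar rts m ->
     ((forall s : {rmorphism kbar -> kbar}, in_Gk emb s -> fixed_by rts s m)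
      /\ in_coset p rts (fdiv D) m)
     <->
     (exists (a : {poly k}) (s : k) (g : k) (al : {poly k}),
        [/\ coprimep a h, s != 0, g != 0 & coprimep al h] /\
        [/\ cb ^ r * Nbar rts (Lemb emb a) = emb s ^+ p,
            forall w, w \in rts ->
              m.1 w = Lemb emb a w * emb g * Lemb emb al w ^+ p
          & m.2 = emb s * emb g ^+ (n %/ p) * Nbar rts (Lemb emb al)])).
Proof.
move=> pp pchar [z zprim] kclos c0 _ hfree n0 pn hE n cb hb.
have cosetE := in_fdiv_cosetE pp pchar kclos c0 hfree hE zprim n0.
split=> [D D' gD gD' dD dD' m | D gD dD m um].
  by rewrite (cosetE _ _ gD dD) (cosetE _ _ gD' dD').
rewrite (cosetE _ _ gD dD); split=> [[mfix [_ mN]] | mH].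
  exact (Gk_fixed_Hr_image kclos hE um mfix mN).
split; first exact (Hr_image_fixed hE mH).
by split=> //; exact (Hr_image_norm hE pn mH).
Qed.
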